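(* Let $G=(V,E,\sigma)$ be a graph as in the context, $\Gamma$ a nonempty family of walks, and $1<p<\infty$. For $q>1$ let $\rho_q$ denote the unique extremal density for $\mathrm{Mod}_q(\Gamma)$. Then $\lim_{q\to p}\|\rho_p-\rho_q\|=0$ for any norm $\|\cdot\|$ on $\mathbb{R}^E$.
   Context: Let $G=(V,E,\sigma)$ be a finite simple graph (directed or undirected) with edge weights $\sigma:E\to(0,\infty)$. A walk is a string of edges $e_1\dots e_r$, $r\ge1$, $e_i=(v_i,v_{i+1})\in E$, with $\rho$-length $\ell_\rho(\gamma)=\sum_i\rho(e_i)$. $A(\Gamma)=\{\rho:E\to\mathbb{R}:\rho\ge0,\ \ell_\rho(\gamma)\ge1\ \forall\gamma\in\Gamma\}$, $\mathcal{E}_q(\rho)=\sum_e\sigma(e)|\rho(e)|^q$, $\mathrm{Mod}_q(\Gamma)=\inf_{\rho\in A(\Gamma)}\mathcal{E}_q(\rho)$; an extremal density is a minimizer in $A(\Gamma)$, unique when $1<q<\infty$. *)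

From Stdlib Require Import Reals List.
Import ListNotations.
Open Scope R_scope.

Fixpoint sum_list {E : Type} (f : E -> R) (l : list E) : R :=
  match l with
  | [] => 0
  | e :: l' => f e + sum_list f l'
  end.

(* x^q for x >= 0 and real q > 0, with the convention 0^q = 0. *)
Definition rpow (x q : R) : R :=
  if Req_EM_T x 0 then 0 else Rpower x q.

(* E is the (finite) edge
   type enumerated by enumE, ends e = (u,v) are the endpoints of e
   (for undirected graphs an arbitrary orientation of the edge {u,v}). *)
Definition simple_graph {V E : Type} (directed : bool) (enumE : list E)
  (ends : E -> V * V) : Prop :=
  NoDup enumE /\ (forall e, In e enumE) /\
  (forall e, fst (ends e) <> snd (ends e)) /\
  (forall e e', ends e = ends e' -> e = e') /\
  (directed = false -> forall e e',
       ends e = (snd (ends e'), fst (ends e')) -> e = e').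

Definition joins {V E : Type} (directed : bool) (ends : E -> V * V)
  (e : E) (u w : V) : Prop :=
  ends e = (u, w) \/ (directed = false /\ ends e = (w, u)).

Inductive walk_from {V E : Type} (directed : bool) (ends : E -> V * V)
  : V -> list E -> Prop :=
| walk_one : forall e u w, joins directed ends e u w ->
    walk_from directed ends u [e]
| walk_cons : forall e u w rest, joins directed ends e u w ->
    walk_from directed ends w rest -> walk_from directed ends u (e :: rest).

Definition is_walk {V E : Type} (directed : bool) (ends : E -> V * V)
  (g : list E) : Prop := exists u, walk_from directed ends u g.

Definition rho_length {E : Type} (rho : E -> R) (g : list E) : R :=
  sum_list rho g.

Definition admissible {E : Type} (Gamma : list E -> Prop) (rho : E -> R) : Prop :=
  (forall e, 0 <= rho e) /\ (forall g, Gamma g -> 1 <= rho_length rho g).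

Definition energy {E : Type} (enumE : list E) (sigma : E -> R) (q : R)
  (rho : E -> R) : R :=
  sum_list (fun e => sigma e * rpow (Rabs (rho e)) q) enumE.

Definition extremal_density {E : Type} (enumE : list E) (sigma : E -> R)
  (Gamma : list E -> Prop) (q : R) (rho : E -> R) : Prop :=
  admissible Gamma rho /\
  forall rho', admissible Gamma rho' -> energy enumE sigma q rho <= energy enumE sigma q rho'.

Definition is_norm {E : Type} (N : (E -> R) -> R) : Prop :=
  (forall x, 0 <= N x) /\
  (forall x, N x = 0 -> forall e, x e = 0) /\
  (forall c x, N (fun e => c * x e) = Rabs c * N x) /\
  (forall x y, N (fun e => x e + y e) <= N x + N y).

(* Comparing with the constant density 1 bounds every extremal density rho_q, q > 1, by a
   constant B independent of q.  On [0, B] the map t |-> t^p is uniformly convex and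
   t |-> t^q depends Lipschitz-continuously on q.  If rho_p and rho_q differed by eta on
   some edge, the admissible midpoint (rho_p + rho_q) / 2 would have p-energy smaller than
   that of rho_p by a fixed amount depending on eta, whereas minimality of rho_q for the
   q-energy makes the p-energies of rho_p and rho_q differ only by O(|q - p|).  Hence
   rho_q -> rho_p coordinatewise, and every norm on R^E is dominated by the coordinates. *)

From Stdlib Require Import Reals List Lra Psatz ClassicalEpsilon FunctionalExtensionality.
From Coquelicot Require Coquelicot.
Open Scope R_scope.

Lemma Rpower_gt0 x a : 0 < Rpower x a.
Proof. apply exp_pos. Qed.

Lemma Rpower_1_l a : Rpower 1 a = 1.
Proof. unfold Rpower; rewrite ln_1, Rmult_0_r; apply exp_0. Qed.

Lemma Rpower_lt1 x a : 0 < a -> 0 < x < 1 -> Rpower x a < 1.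
Proof. intros Ha Hx. rewrite <- (Rpower_1_l a). apply Rlt_Rpower_l; lra. Qed.

Lemma rpow_pos x a : 0 < x -> rpow x a = Rpower x a.
Proof. intros H; unfold rpow; destruct (Req_EM_T x 0); [lra|auto]. Qed.

Lemma rpow_0 a : rpow 0 a = 0.
Proof. unfold rpow; destruct (Req_EM_T 0 0); [auto|lra]. Qed.

Lemma rpow_ge0 x a : 0 <= rpow x a.
Proof. unfold rpow; destruct (Req_EM_T x 0); [lra|left; apply Rpower_gt0]. Qed.

Lemma rpow_1_l a : rpow 1 a = 1.
Proof. rewrite rpow_pos by lra; apply Rpower_1_l. Qed.

Lemma Rpower_pred_mul t a : 0 < t -> Rpower t (a - 1) * t = Rpower t a.
Proof.
  intros Ht. rewrite <- (Rpower_1 t) at 2 by auto.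
  rewrite <- Rpower_plus. f_equal. ring.
Qed.

Lemma Rpower_tangent_line a t x : 1 <= a -> 0 < t -> 0 < x ->
  Rpower t a + a * Rpower t (a - 1) * (x - t) <= Rpower x a.
Proof.
  intros Ha Ht Hx.
  assert (Hmin : 0 < Rmin t x) by (apply Rmin_glb_lt; lra).
  destruct (Coquelicot.Derive.MVT_gen (fun y => Rpower y a) t x
     (fun y => a * Rpower y (a - 1))) as [c [Hc Heq]].
  - intros y Hy. apply Coquelicot.Derive.is_derive_Reals.
    apply derivable_pt_lim_power. lra.
  - intros y Hy. apply derivable_continuous_pt.
    exists (a * Rpower y (a - 1)). apply derivable_pt_lim_power. lra.
  - (* the derivative a y^(a-1) is nondecreasing, so the secant slope beats the slope at t *)
    simpl in Heq. destruct (Rle_or_lt t x) as [Htx|Htx].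
    + rewrite Rmin_left, Rmax_right in Hc by lra.
      assert (Rpower t (a - 1) <= Rpower c (a - 1)) by (apply Rle_Rpower_l; lra).
      assert (0 <= a * (x - t)) by nra. nra.
    + rewrite Rmin_right, Rmax_left in Hc by lra.
      assert (Rpower c (a - 1) <= Rpower t (a - 1)) by (apply Rle_Rpower_l; lra).
      assert (0 <= a * (t - x)) by nra. nra.
Qed.

Lemma rpow_tangent_line a t x : 1 <= a -> 0 < t -> 0 <= x ->
  Rpower t a + a * Rpower t (a - 1) * (x - t) <= rpow x a.
Proof.
  intros Ha Ht [Hx|<-].
  - rewrite rpow_pos by auto. apply Rpower_tangent_line; auto.
  - rewrite rpow_0. pose proof (Rpower_pred_mul t a Ht).
    pose proof (Rpower_gt0 t a). pose proof (Rpower_gt0 t (a - 1)). nra.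
Qed.

Lemma rpow_midpoint_convex a x y : 1 <= a -> 0 <= x -> 0 <= y ->
  rpow ((x + y) / 2) a <= (rpow x a + rpow y a) / 2.
Proof.
  intros Ha Hx Hy.
  destruct (Req_dec (x + y) 0) as [H0|H0].
  - replace x with 0 by lra. replace y with 0 by lra.
    replace ((0 + 0) / 2) with 0 by field. rewrite rpow_0. lra.
  - assert (Ht : 0 < (x + y) / 2) by lra.
    pose proof (rpow_tangent_line a _ x Ha Ht Hx).
    pose proof (rpow_tangent_line a _ y Ha Ht Hy).
    rewrite (rpow_pos ((x + y) / 2)) by auto. nra.
Qed.

Lemma rpow_midpoint_gap_quarters a x y : 1 <= a -> 0 <= x < y ->
  a * (y - x) / 8 * (Rpower ((x + 3 * y) / 4) (a - 1) - Rpower ((3 * x + y) / 4) (a - 1))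
  <= (rpow x a + rpow y a) / 2 - rpow ((x + y) / 2) a.
Proof.
  intros Ha [Hx Hxy].
  set (x' := (3 * x + y) / 4). set (y' := (x + 3 * y) / 4).
  assert (Hx' : 0 < x') by (unfold x'; lra).
  assert (Hy' : 0 < y') by (unfold y'; lra).
  (* tangents at the quarter points x', y', and midpoint convexity between them *)
  pose proof (rpow_tangent_line a y' y Ha Hy' ltac:(lra)) as Ty.
  pose proof (rpow_tangent_line a x' x Ha Hx' Hx) as Tx.
  pose proof (rpow_midpoint_convex a x' y' Ha ltac:(lra) ltac:(lra)) as M.
  replace ((x' + y') / 2) with ((x + y) / 2) in M by (unfold x', y'; field).
  rewrite (rpow_pos x'), (rpow_pos y') in M by auto.
  replace (y - y') with ((y - x) / 4) in Ty by (unfold y'; field).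
  replace (x - x') with (- ((y - x) / 4)) in Tx by (unfold x'; field).
  nra.
Qed.

Definition power_gap r B d := Rpower d r * (1 - Rpower (1 - d / B) r).

Lemma power_gap_gt0 r B d : 0 < r -> 0 < d < B -> 0 < power_gap r B d.
Proof.
  intros Hr Hd. unfold power_gap.
  assert (0 < d / B < 1).
  { split; [apply Rdiv_lt_0_compat; lra|].
    apply (Rmult_lt_reg_r B); [lra|]. field_simplify; lra. }
  pose proof (Rpower_lt1 (1 - d / B) r Hr ltac:(lra)).
  pose proof (Rpower_gt0 d r). nra.
Qed.

Lemma Rpower_sub_ge_power_gap r B d x y : 0 < r -> 0 < d -> 0 < x < y -> y <= B ->
  d <= y - x -> power_gap r B d <= Rpower y r - Rpower x r.
Proof.
  intros Hr Hd Hxy HyB Hdxy. unfold power_gap.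
  assert (Hratio : x / y <= 1 - d / B).
  { apply Rle_trans with (1 - d / y).
    - apply (Rmult_le_reg_r y); [lra|]. field_simplify; lra.
    - assert (d / B <= d / y) by (apply Rmult_le_compat_l; [lra|apply Rinv_le_contravar; lra]).
      lra. }
  assert (Hxr : Rpower x r = Rpower y r * Rpower (x / y) r).
  { rewrite Rpower_mult_distr by (try apply Rdiv_lt_0_compat; lra). f_equal. field. lra. }
  assert (0 < x / y) by (apply Rdiv_lt_0_compat; lra).
  assert (Rpower (x / y) r <= Rpower (1 - d / B) r) by (apply Rle_Rpower_l; lra).
  assert (Rpower (1 - d / B) r <= 1).
  { assert (0 <= d / B) by (apply Rmult_le_pos; [|apply Rlt_le, Rinv_0_lt_compat]; lra).
    rewrite <- (Rpower_1_l r) at 2. apply Rle_Rpower_l; lra. }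
  assert (Rpower d r <= Rpower y r) by (apply Rle_Rpower_l; lra).
  pose proof (Rpower_gt0 d r). pose proof (Rpower_gt0 y r).
  rewrite Hxr.
  apply Rle_trans with (Rpower y r * (1 - Rpower (1 - d / B) r)).
  - apply Rmult_le_compat_r; lra.
  - assert (Rpower y r * Rpower (x / y) r <= Rpower y r * Rpower (1 - d / B) r)
      by (apply Rmult_le_compat_l; lra).
    lra.
Qed.

Definition midpoint_gap a B eta := a * eta / 8 * power_gap (a - 1) B (eta / 2).

Lemma midpoint_gap_gt0 a B eta : 1 < a -> 0 < eta <= B -> 0 < midpoint_gap a B eta.
Proof.
  intros Ha Heta. unfold midpoint_gap.
  pose proof (power_gap_gt0 (a - 1) B (eta / 2) ltac:(lra) ltac:(lra)).
  apply Rmult_lt_0_compat; [|lra].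
  assert (0 < a * eta) by nra. lra.
Qed.

Lemma rpow_midpoint_gap_lt a B eta x y : 1 < a -> 0 < eta -> 0 <= x < y -> y <= B ->
  eta <= y - x -> midpoint_gap a B eta <= (rpow x a + rpow y a) / 2 - rpow ((x + y) / 2) a.
Proof.
  intros Ha Heta Hxy HyB Hd. unfold midpoint_gap.
  eapply Rle_trans; [|apply rpow_midpoint_gap_quarters; lra].
  pose proof (power_gap_gt0 (a - 1) B (eta / 2) ltac:(lra) ltac:(lra)).
  apply Rmult_le_compat.
  - assert (0 <= a * eta) by nra. lra.
  - lra.
  - assert (a * eta <= a * (y - x)) by nra. lra.
  - apply Rpower_sub_ge_power_gap; lra.
Qed.

Lemma rpow_midpoint_gap a B eta x y : 1 < a -> 0 < eta -> 0 <= x <= B -> 0 <= y <= B ->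
  eta <= Rabs (x - y) ->
  midpoint_gap a B eta <= (rpow x a + rpow y a) / 2 - rpow ((x + y) / 2) a.
Proof.
  intros Ha Heta Hx Hy Hd.
  destruct (Rlt_or_le x y) as [Hxy|Hyx].
  - rewrite Rabs_minus_sym, Rabs_pos_eq in Hd by lra. apply rpow_midpoint_gap_lt; lra.
  - rewrite Rabs_pos_eq in Hd by lra.
    replace ((rpow x a + rpow y a) / 2) with ((rpow y a + rpow x a) / 2) by lra.
    replace ((x + y) / 2) with ((y + x) / 2) by lra.
    apply rpow_midpoint_gap_lt; lra.
Qed.

Lemma Rabs_ln_mul_Rpower_le x c B P : 0 < x <= B -> 1 <= B -> 1 <= c <= P ->
  Rabs (ln x * Rpower x c) <= 1 + B * Rpower B P.
Proof.
  intros Hx HB Hc.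
  pose proof (Rpower_gt0 x c). pose proof (Rpower_gt0 B P).
  rewrite Rabs_mult, (Rabs_pos_eq (Rpower x c)) by lra.
  destruct (Rle_or_lt x 1) as [Hx1|Hx1].
  - assert (Hln : ln x <= 0) by (rewrite <- ln_1; apply Rcomplements.ln_le; lra).
    assert (Rpower x c <= x).
    { rewrite <- (exp_ln x) at 2 by lra. unfold Rpower.
      destruct (Req_dec (c * ln x) (ln x)) as [->|]; [lra|].
      left; apply exp_increasing. nra. }
    (* 1 / x = exp (- ln x) >= 1 - ln x, i.e. - x ln x <= 1 - x *)
    assert (- (x * ln x) <= 1).
    { pose proof (exp_ineq1_le (- ln x)) as Hexp. rewrite exp_Ropp, exp_ln in Hexp by lra.
      apply (Rmult_le_compat_l x) in Hexp; [|lra]. rewrite Rinv_r in Hexp; nra. }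
    rewrite Rabs_left1 by lra. nra.
  - assert (Hln : 0 <= ln x) by (rewrite <- ln_1; apply Rcomplements.ln_le; lra).
    assert (ln x <= B) by (pose proof (exp_ineq1_le (ln x)); rewrite exp_ln in *; lra).
    assert (Rpower x c <= Rpower B P).
    { apply Rle_trans with (Rpower B c); [apply Rle_Rpower_l|apply Rle_Rpower]; lra. }
    rewrite Rabs_pos_eq by lra. nra.
Qed.

Lemma rpow_exponent_lipschitz x a b B P : 0 <= x <= B -> 1 <= B ->
  1 <= a <= P -> 1 <= b <= P ->
  Rabs (rpow x a - rpow x b) <= Rabs (a - b) * (1 + B * Rpower B P).
Proof.
  intros [[Hx|<-] HxB] HB Ha Hb.
  - rewrite !rpow_pos by lra.
    destruct (Coquelicot.Derive.MVT_gen (Rpower x) b a (fun c => ln x * Rpower x c))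
      as [c [Hc Heq]]; simpl in *.
    + intros c _. apply Coquelicot.Derive.is_derive_Reals.
      replace (ln x * Rpower x c) with (exp (c * ln x) * (1 * ln x)) by (unfold Rpower; ring).
      apply (derivable_pt_lim_comp (fun c => c * ln x) exp).
      * apply derivable_pt_lim_scal_right, derivable_pt_lim_id.
      * apply derivable_pt_lim_exp.
    + intros c _. apply derivable_continuous_pt. unfold Rpower.
      apply (derivable_pt_comp (fun c => c * ln x) exp).
      * apply derivable_pt_mult; [apply derivable_pt_id|apply derivable_pt_const].
      * apply derivable_pt_exp.
    + rewrite Heq, Rabs_mult, Rmult_comm.
      apply Rmult_le_compat_l; [apply Rabs_pos|].
      apply Rabs_ln_mul_Rpower_le; try lra.
      split; [apply Rle_trans with (Rmin b a)|apply Rle_trans with (Rmax b a)];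
        try lra; [apply Rmin_glb|apply Rmax_lub]; lra.
  - rewrite !rpow_0, Rminus_diag, Rabs_R0.
    pose proof (Rpower_gt0 B P). apply Rmult_le_pos; [apply Rabs_pos|nra].
Qed.

Section SumList.
Context {A : Type}.
Implicit Types (f g : A -> R) (l : list A).

Lemma sum_list_ext f g l : (forall e, In e l -> f e = g e) -> sum_list f l = sum_list g l.
Proof. induction l as [|a l IH]; simpl; intros H; auto. rewrite H, IH; auto. Qed.

Lemma sum_list_le f g l : (forall e, In e l -> f e <= g e) -> sum_list f l <= sum_list g l.
Proof.
  induction l as [|a l IH]; simpl; intros H; [lra|].
  pose proof (H a (or_introl eq_refl)). pose proof (IH (fun e He => H e (or_intror He))). lra.
Qed.

Lemma sum_list_ge0 f l : (forall e, In e l -> 0 <= f e) -> 0 <= sum_list f l.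
Proof.
  induction l as [|a l IH]; simpl; intros H; [lra|].
  pose proof (H a (or_introl eq_refl)). pose proof (IH (fun e He => H e (or_intror He))). lra.
Qed.

Lemma sum_list_ge_In f l e : (forall e', In e' l -> 0 <= f e') -> In e l -> f e <= sum_list f l.
Proof.
  induction l as [|a l IH]; simpl; intros H; [tauto|]. intros [<-|Hin].
  - pose proof (sum_list_ge0 f l (fun e' He' => H e' (or_intror He'))). lra.
  - pose proof (H a (or_introl eq_refl)). pose proof (IH (fun e' He' => H e' (or_intror He')) Hin).
    lra.
Qed.

Lemma sum_list_plus f g l : sum_list (fun e => f e + g e) l = sum_list f l + sum_list g l.
Proof. induction l; simpl; [ring|]. rewrite IHl. ring. Qed.

Lemma sum_list_scal c f l : sum_list (fun e => c * f e) l = c * sum_list f l.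
Proof. induction l; simpl; [ring|]. rewrite IHl. ring. Qed.

Lemma exists_pos_lower_bound f l : (forall e, In e l -> 0 < f e) ->
  exists m, 0 < m /\ forall e, In e l -> m <= f e.
Proof.
  induction l as [|a l IH]; simpl; intros H.
  - exists 1. split; [lra|tauto].
  - destruct (IH (fun e He => H e (or_intror He))) as [m [Hm Hle]].
    pose proof (H a (or_introl eq_refl)).
    exists (Rmin (f a) m). split; [apply Rmin_glb_lt; lra|].
    intros e [<-|He]; [apply Rmin_l|]. eapply Rle_trans; [apply Rmin_r|auto].
Qed.

End SumList.

Section NormOnFunctions.
Context {E : Type} (enumE : list E) (N : (E -> R) -> R).
Hypotheses (Hnodup : NoDup enumE) (Hall : forall e, In e enumE) (HN : is_norm N).

Definition unit_vector (e : E) : E -> R :=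
  fun e' => if excluded_middle_informative (e = e') then 1 else 0.

Lemma sum_list_unit_vector (x : E -> R) (l : list E) (e' : E) : NoDup l ->
  sum_list (fun e => x e * unit_vector e e') l =
  if excluded_middle_informative (In e' l) then x e' else 0.
Proof.
  induction l as [|a l IH]; simpl; intros Hnd.
  - destruct (excluded_middle_informative False); [contradiction|ring].
  - inversion Hnd; subst. rewrite IH by auto. unfold unit_vector.
    destruct (excluded_middle_informative (a = e')) as [Ha|Ha];
    destruct (excluded_middle_informative (In e' l));
    destruct (excluded_middle_informative (a = e' \/ In e' l)); subst;
    tauto || ring.
Qed.

Lemma is_norm_le_sum_list (x : E -> R) (l : list E) :
  N (fun e' => sum_list (fun e => x e * unit_vector e e') l) <=
  sum_list (fun e => Rabs (x e) * N (unit_vector e)) l.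
Proof.
  destruct HN as [_ [_ [Hscal Htri]]].
  induction l as [|a l IH]; simpl.
  - replace (fun _ : E => 0) with (fun e : E => 0 * 0) by (apply functional_extensionality; intros; ring).
    rewrite (Hscal 0 (fun _ => 0)), Rabs_R0. lra.
  - eapply Rle_trans; [apply (Htri (fun e' => x a * unit_vector a e'))|].
    rewrite Hscal. lra.
Qed.

Lemma is_norm_le_sum_coords (x : E -> R) :
  N x <= sum_list (fun e => Rabs (x e) * N (unit_vector e)) enumE.
Proof.
  eapply Rle_trans; [|apply is_norm_le_sum_list]. right. f_equal.
  apply functional_extensionality. intros e'.
  rewrite sum_list_unit_vector by auto.
  destruct (excluded_middle_informative (In e' enumE)); [auto|exfalso; auto].
Qed.

Lemma is_norm_lt_of_coords_lt (eps : R) : 0 < eps ->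
  exists eta, 0 < eta /\ forall x : E -> R, (forall e, Rabs (x e) < eta) -> N x < eps.
Proof.
  intros Heps.
  set (T := sum_list (fun e => N (unit_vector e)) enumE).
  assert (HT : 0 <= T) by (apply sum_list_ge0; intros; apply HN).
  exists (eps / (T + 1)). split; [apply Rdiv_lt_0_compat; lra|].
  intros x Hx.
  eapply Rle_lt_trans; [apply is_norm_le_sum_coords|].
  apply Rle_lt_trans with (eps / (T + 1) * T).
  - unfold T. rewrite <- sum_list_scal. apply sum_list_le. intros e _.
    apply Rmult_le_compat_r; [apply HN|left; apply Hx].
  - apply (Rmult_lt_reg_r (T + 1)); [lra|].
    replace (eps / (T + 1) * T * (T + 1)) with (eps * T) by (field; lra). nra.
Qed.

End NormOnFunctions.

Lemma admissible_midpoint {E : Type} (Gamma : list E -> Prop) (r1 r2 : E -> R) :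
  admissible Gamma r1 -> admissible Gamma r2 ->
  admissible Gamma (fun e => (r1 e + r2 e) / 2).
Proof.
  intros [H1 L1] [H2 L2]. split.
  - intros e. pose proof (H1 e). pose proof (H2 e). lra.
  - intros g Hg. unfold rho_length.
    rewrite (sum_list_ext _ (fun e => / 2 * r1 e + / 2 * r2 e)) by (intros; lra).
    rewrite sum_list_plus, !sum_list_scal.
    pose proof (L1 g Hg). pose proof (L2 g Hg). unfold rho_length in *. lra.
Qed.

Section Energy.
Context {E : Type} (enumE : list E) (sigma : E -> R).
Hypotheses (Hall : forall e, In e enumE) (Hsigma : forall e, 0 < sigma e).

Lemma energy_nonneg_density q (r : E -> R) : (forall e, 0 <= r e) ->
  energy enumE sigma q r = sum_list (fun e => sigma e * rpow (r e) q) enumE.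
Proof. intros Hr. apply sum_list_ext. intros e _. rewrite Rabs_pos_eq; auto. Qed.

Lemma energy_one q : energy enumE sigma q (fun _ => 1) = sum_list sigma enumE.
Proof.
  rewrite energy_nonneg_density by (intros; lra).
  apply sum_list_ext. intros. rewrite rpow_1_l. ring.
Qed.

Lemma energy_exponent_lipschitz a b B P (r : E -> R) : (forall e, 0 <= r e <= B) -> 1 <= B ->
  1 <= a <= P -> 1 <= b <= P ->
  energy enumE sigma a r <=
  energy enumE sigma b r + Rabs (a - b) * (1 + B * Rpower B P) * sum_list sigma enumE.
Proof.
  intros Hr HB Ha Hb.
  assert (Hr0 : forall e, 0 <= r e) by (intros e; apply Hr).
  rewrite !energy_nonneg_density, <- sum_list_scal, <- sum_list_plus by auto.
  apply sum_list_le. intros e _.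
  pose proof (rpow_exponent_lipschitz (r e) a b B P (Hr e) HB Ha Hb).
  pose proof (Rle_abs (rpow (r e) a - rpow (r e) b)). pose proof (Hsigma e). nra.
Qed.

Lemma energy_midpoint_gap a B eta (r1 r2 : E -> R) e : 1 < a -> 0 < eta ->
  (forall e, 0 <= r1 e <= B) -> (forall e, 0 <= r2 e <= B) -> eta <= Rabs (r1 e - r2 e) ->
  energy enumE sigma a (fun e => (r1 e + r2 e) / 2) <=
  (energy enumE sigma a r1 + energy enumE sigma a r2) / 2 - sigma e * midpoint_gap a B eta.
Proof.
  intros Ha Heta H1 H2 Hd.
  assert (H10 : forall e, 0 <= r1 e) by (intros e'; apply H1).
  assert (H20 : forall e, 0 <= r2 e) by (intros e'; apply H2).
  rewrite !energy_nonneg_density by (auto; intros e'; pose proof (H10 e'); pose proof (H20 e'); lra).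
  set (gap := fun e => sigma e *
    ((rpow (r1 e) a + rpow (r2 e) a) / 2 - rpow ((r1 e + r2 e) / 2) a)).
  assert (Hgap : forall e', In e' enumE -> 0 <= gap e').
  { intros e' _. apply Rmult_le_pos; [left; apply Hsigma|].
    pose proof (rpow_midpoint_convex a (r1 e') (r2 e') ltac:(lra) (H10 e') (H20 e')). lra. }
  assert (sigma e * midpoint_gap a B eta <= gap e).
  { apply Rmult_le_compat_l; [left; apply Hsigma|]. apply rpow_midpoint_gap; auto. }
  pose proof (sum_list_ge_In gap enumE e Hgap (Hall e)).
  assert (Hsum : sum_list gap enumE = sum_list (fun e =>
      / 2 * (sigma e * rpow (r1 e) a) + / 2 * (sigma e * rpow (r2 e) a) +
      - 1 * (sigma e * rpow ((r1 e + r2 e) / 2) a)) enumE)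
    by (apply sum_list_ext; intros; unfold gap; cbv beta; lra).
  rewrite !sum_list_plus, !sum_list_scal in Hsum.
  lra.
Qed.

End Energy.

Section ExtremalDensity.
Context {E : Type} (enumE : list E) (sigma : E -> R) (Gamma : list E -> Prop).
Hypotheses (Hall : forall e, In e enumE) (Hsigma : forall e, 0 < sigma e).
Hypothesis Hone : admissible Gamma (fun _ => 1).

Lemma extremal_density_bounded : exists B, 1 <= B /\
  forall q rho, 1 < q -> extremal_density enumE sigma Gamma q rho -> forall e, 0 <= rho e <= B.
Proof.
  set (S := sum_list sigma enumE).
  destruct (exists_pos_lower_bound sigma enumE (fun e _ => Hsigma e)) as [s0 [Hs0 Hs0le]].
  assert (HS : 0 <= S) by (apply sum_list_ge0; intros; left; auto).
  assert (HSs0 : 0 <= S / s0) by (apply Rmult_le_pos; [lra|left; apply Rinv_0_lt_compat; lra]).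
  exists (1 + S / s0). split; [lra|].
  intros q rho Hq [[Hrho0 _] Hmin] e. split; [auto|].
  pose proof (Hmin _ Hone) as Hle. rewrite energy_one, energy_nonneg_density in Hle by auto.
  assert (Hterm : sigma e * rpow (rho e) q <= S).
  { eapply Rle_trans; [|exact Hle].
    apply (sum_list_ge_In (fun e => sigma e * rpow (rho e) q)); auto.
    intros; apply Rmult_le_pos; [left; auto|apply rpow_ge0]. }
  destruct (Rle_or_lt (rho e) 1) as [Hle1|Hgt1]; [lra|].
  assert (rho e <= rpow (rho e) q).
  { rewrite rpow_pos by lra. rewrite <- (Rpower_1 (rho e)) at 1 by lra.
    apply Rle_Rpower; lra. }
  assert (rho e <= S / s0).
  { pose proof (Hs0le e (Hall e)). pose proof (Hsigma e).
    apply (Rmult_le_reg_l s0); [lra|].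
    replace (s0 * (S / s0)) with S by (field; lra). nra. }
  lra.
Qed.

Lemma extremal_densities_close p q B rp rq e eta : 1 < p -> 1 < q <= p + 1 -> 1 <= B ->
  0 < eta ->
  extremal_density enumE sigma Gamma p rp -> extremal_density enumE sigma Gamma q rq ->
  (forall e, 0 <= rp e <= B) -> (forall e, 0 <= rq e <= B) ->
  Rabs (q - p) * (1 + B * Rpower B (p + 1)) * sum_list sigma enumE
    < sigma e * midpoint_gap p B eta ->
  Rabs (rp e - rq e) < eta.
Proof.
  intros Hp Hq HB Heta [Hadp Hminp] [Hadq Hminq] Hbp Hbq Hsmall.
  apply Rnot_le_lt. intros Hfar.
  (* With D := |q - p| (1 + B B^(p+1)) sum sigma:  E_p(rho_p) <= E_p(mid) <=
     (E_p(rho_p) + E_p(rho_q)) / 2 - sigma e * gap, and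
     E_p(rho_q) <= E_q(rho_q) + D <= E_q(rho_p) + D <= E_p(rho_p) + 2 D. *)
  pose proof (Hminp _ (admissible_midpoint Gamma rp rq Hadp Hadq)) as Emid.
  pose proof (Hminq _ Hadp) as Eq.
  pose proof (energy_exponent_lipschitz enumE sigma Hsigma p q B (p + 1) rq Hbq HB
    ltac:(lra) ltac:(lra)) as Lq.
  pose proof (energy_exponent_lipschitz enumE sigma Hsigma q p B (p + 1) rp Hbp HB
    ltac:(lra) ltac:(lra)) as Lp.
  rewrite Rabs_minus_sym in Lq.
  pose proof (energy_midpoint_gap enumE sigma Hall Hsigma p B eta rp rq e Hp Heta Hbp Hbq Hfar).
  lra.
Qed.

Lemma extremal_density_coords_continuous (rho : R -> E -> R) (p : R) : 1 < p ->
  (forall q, 1 < q -> extremal_density enumE sigma Gamma q (rho q)) ->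
  forall eta, 0 < eta -> exists delta, 0 < delta /\
    forall q, 1 < q -> Rabs (q - p) < delta -> forall e, Rabs (rho p e - rho q e) < eta.
Proof.
  intros Hp Hrho eta Heta.
  destruct extremal_density_bounded as [B [HB Hbd]].
  destruct (exists_pos_lower_bound sigma enumE (fun e _ => Hsigma e)) as [s0 [Hs0 Hs0le]].
  set (eta' := Rmin eta B).
  assert (Heta' : 0 < eta' <= B) by (split; [apply Rmin_glb_lt|apply Rmin_r]; lra).
  set (c := s0 * midpoint_gap p B eta').
  assert (Hc : 0 < c) by (apply Rmult_lt_0_compat; [|apply midpoint_gap_gt0]; lra).
  set (L := (1 + B * Rpower B (p + 1)) * sum_list sigma enumE).
  assert (HL : 0 <= L).
  { apply Rmult_le_pos; [pose proof (Rpower_gt0 B (p + 1)); nra|].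
    apply sum_list_ge0; intros; left; auto. }
  exists (Rmin 1 (c / (L + 1))).
  split; [apply Rmin_glb_lt; [lra|apply Rdiv_lt_0_compat; lra]|].
  intros q Hq Hqp e.
  assert (Hq1 : Rabs (q - p) < 1) by (eapply Rlt_le_trans; [exact Hqp|apply Rmin_l]).
  assert (Hqc : Rabs (q - p) * (L + 1) < c).
  { apply Rlt_le_trans with (c / (L + 1) * (L + 1)); [|right; field; lra].
    apply Rmult_lt_compat_r; [lra|]. eapply Rlt_le_trans; [exact Hqp|apply Rmin_r]. }
  apply Rlt_le_trans with eta'; [|apply Rmin_l].
  apply (extremal_densities_close p q B (rho p) (rho q) e eta'); try lra; auto.
  - apply Rabs_def2 in Hq1. lra.
  - intros e'. apply (Hbd p); auto.
  - intros e'. apply (Hbd q); auto.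
  - apply Rlt_le_trans with c.
    + pose proof (Rabs_pos (q - p)). unfold L in Hqc. nra.
    + apply Rmult_le_compat_r; [apply Rlt_le, midpoint_gap_gt0; lra|auto].
Qed.

End ExtremalDensity.

Lemma walk_from_nonempty {V E : Type} (directed : bool) (ends : E -> V * V) u g :
  walk_from directed ends u g -> exists e r, g = e :: r.
Proof. intros H; destruct H; eauto. Qed.

Lemma admissible_one_of_walks {V E : Type} (directed : bool) (ends : E -> V * V)
  (Gamma : list E -> Prop) : (forall g, Gamma g -> is_walk directed ends g) ->
  admissible Gamma (fun _ => 1).
Proof.
  intros Hwalks. split; [intros; lra|].
  intros g Hg. destruct (Hwalks g Hg) as [u Hu].
  destruct (walk_from_nonempty _ _ _ _ Hu) as [e [r ->]].
  unfold rho_length; simpl.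
  pose proof (sum_list_ge0 (fun _ : E => 1) r (fun _ _ => Rle_0_1)). lra.
Qed.

Theorem mainTheorem11 (V E : Type) (directed : bool) (enumE : list E)
  (ends : E -> V * V) (sigma : E -> R)
  (Hgraph : simple_graph directed enumE ends)
  (Hsigma : forall e, 0 < sigma e)
  (Gamma : list E -> Prop)
  (Hwalks : forall g, Gamma g -> is_walk directed ends g)
  (Hne : exists g, Gamma g)
  (p : R) (Hp : 1 < p)
  (rho : R -> E -> R)
  (Hrho : forall q, 1 < q -> extremal_density enumE sigma Gamma q (rho q))
  (N : (E -> R) -> R) (HN : is_norm N) :
  forall eps, 0 < eps -> exists delta, 0 < delta /\
    forall q, 1 < q -> Rabs (q - p) < delta ->
      N (fun e => rho p e - rho q e) < eps.
Proof.
  intros eps Heps.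
  destruct Hgraph as [Hnodup [Hall _]].
  destruct (is_norm_lt_of_coords_lt enumE N Hnodup Hall HN eps Heps) as [eta [Heta Hsmall]].
  destruct (extremal_density_coords_continuous enumE sigma Gamma Hall Hsigma
    (admissible_one_of_walks directed ends Gamma Hwalks) rho p Hp Hrho eta Heta)
    as [delta [Hdelta Hclose]].
  exists delta. split; [exact Hdelta|].
  intros q Hq Hqp. apply Hsmall. intros e. apply Hclose; auto.
Qed.
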